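(* Let $n \geq 3$ be an integer, let $p(x) \in \mathcal{T}_n$, and let $r = \deg \mathrm{Min}(p,x)$ with $3 \leq r \leq n$. Let $q(x) \in \mathcal{J}(p(x))$ and let $f(x) = q(x)/\gcd(p(x),p'(x)) \in \mathbb{Z}[x]$. Write $\mathrm{Min}(p,x) = \sum_{i=0}^r b_i x^{r-i}$ and $f(x) = \sum_{i=0}^{r-1} c_i x^{r-1-i}$ with integer coefficients. Then $c_0 = b_0 = 1$, $c_1 = b_1$, and $c_2 = b_2 + n - 1$.
   Context: A nonzero real polynomial is real-rooted if all its complex roots are real. For $n\ge1$, a Seidel trace polynomial of degree $n$ is a real-rooted polynomial $p(x)=\sum_{i=0}^n a_i x^{n-i}\in\mathbb{Z}[x]$ of degree $n$ with $a_0=1$, $a_1=0$, and $a_2=-\binom{n}{2}$ if $n\ge2$; $\mathcal{T}_n$ is the set of these. For real-rooted $p,q$ with $\deg p = m$, $\deg q = m-1$, roots $\lambda_1\le\dots\le\lambda_m$ of $p$ and $\mu_1\le\dots\le\mu_{m-1}$ of $q$, we say $q$ interlaces $p$ if $\lambda_i \le \mu_i \le \lambda_{i+1}$ for all $i$. For $p\in\mathcal{T}_n$, $\mathcal{J}(p(x))$ is the set of integer polynomials $q(x)$ of degree $n-1$ with $q\in\mathcal{T}_{n-1}$ and $q$ interlacing $p$. Here $\gcd(p(x),p'(x))$ is the monic gcd and $\mathrm{Min}(p,x) := p(x)/\gcd(p(x),p'(x))$. *)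

From HB Require Import structures.
From mathcomp Require Import all_boot all_order all_algebra all_field.
Set Implicit Arguments. Unset Strict Implicit. Unset Printing Implicit Defensive.
Import Order.TTheory GRing.Theory Num.Theory.
Local Open Scope ring_scope.

(* Complex roots are taken in algC (algebraic complex numbers), which contains
   all complex roots of integer polynomials. *)
Definition toC (p : {poly int}) : {poly algC} := map_poly intr p.
Definition toQ (p : {poly int}) : {poly rat} := map_poly intr p.

Definition real_rooted (p : {poly int}) : Prop :=
  p != 0 /\ forall z : algC, root (toC p) z -> z \is Num.real.

Definition sorted_roots (p : {poly int}) (ls : seq algC) : Prop :=
  all (fun x => x \is Num.real) ls /\ sorted <=%R ls /\
  toC p = lead_coef (toC p) *: \prod_(x <- ls) ('X - x%:P).

(* p(x) = sum_{i=0}^n a_i x^{n-i}, so a_i = p`_(n-i) *)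
Definition seidel_trace (n : nat) (p : {poly int}) : Prop :=
  (1 <= n)%N /\ real_rooted p /\ size p = n.+1 /\
  p`_n = 1 /\ p`_(n.-1) = 0 /\ ((2 <= n)%N -> p`_(n - 2) = - ('C(n, 2))%:Z).

Definition interlaces (q p : {poly int}) : Prop :=
  real_rooted p /\ real_rooted q /\ (size p).-1 = (size q).-1 + 1 /\
  exists ls mus : seq algC, sorted_roots p ls /\ sorted_roots q mus /\
    forall i, (i < size mus)%N -> ls`_i <= mus`_i /\ mus`_i <= ls`_i.+1.

Definition J_set (n : nat) (p q : {poly int}) : Prop :=
  size q = n /\ seidel_trace n.-1 q /\ interlaces q p.

Definition gcd_pp' (p : {poly int}) : {poly rat} :=
  let g := gcdp (toQ p) (toQ p)^`() in (lead_coef g)^-1 *: g.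

Definition MinP (p : {poly int}) : {poly rat} := toQ p %/ gcd_pp' p.

(* Write g for the monic gcd of p and p', f = q %/ g and M = p %/ g. Since p
   and q are monic with vanishing second coefficient, X q - p has degree n - 2
   and leading coefficient C(n,2) - C(n-1,2) = n - 1. Dividing q and p by g
   with remainder, X q - p = (X f - M) g + e with deg e <= deg g <= n - 3, so
   X f - M has degree r - 2 and leading coefficient n - 1; its three top
   coefficients f_(r-1) - M_r, f_(r-2) - M_(r-1) and f_(r-3) - M_(r-2) are thus
   0, 0 and n - 1. *)
From HB Require Import structures.
From mathcomp Require Import all_boot all_order all_algebra all_field.
From mathcomp Require Import ring zify.
Import Order.TTheory GRing.Theory Num.Theory.
Local Open Scope ring_scope.

Lemma size_poly_eq_last {R : nzSemiRingType} {p : {poly R}} {m : nat} :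
  p`_m != 0 -> (forall j, (m < j)%N -> p`_j = 0) -> size p = m.+1.
Proof.
move=> pm0 p_gt; apply/eqP; rewrite eqn_leq; apply/andP; split.
  by apply/leq_sizeP => j /p_gt.
by rewrite ltnNge; apply: contra pm0 => /leq_sizeP ->.
Qed.

Lemma coef_mulX_sub_succ (R : nzRingType) (a b : {poly R}) j :
  ('X * a - b)`_j.+1 = a`_j - b`_j.+1.
Proof. by rewrite coefB coefXM. Qed.

Lemma top_coefs_mulX_sub {R : nzRingType} {a b : {poly R}} {s : nat} {c : R} :
  size ('X * a - b) = s.+2 -> lead_coef ('X * a - b) = c ->
  [/\ a`_s.+2 = b`_s.+3, a`_s.+1 = b`_s.+2 & a`_s = b`_s.+1 + c].
Proof.
move=> sz lc; have top j : (s.+1 < j)%N -> ('X * a - b)`_j = 0.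
  by move=> lt_j; apply/leq_sizeP: lt_j; rewrite sz.
have /eqP := top _ (leqnSn s.+2); have /eqP := top _ (ltnSn s.+1).
rewrite !coef_mulX_sub_succ !subr_eq0 => /eqP -> /eqP ->; split=> //.
by rewrite -lc lead_coefE sz coef_mulX_sub_succ addrC subrK.
Qed.

Lemma size_lead_coef_mulX_divp_sub {F : fieldType} {g a b : {poly F}} :
  g \is monic -> (size g < size ('X * a - b)%R)%N ->
  let d := 'X * (a %/ g) - b %/ g in
  size d = (size ('X * a - b)%R - (size g).-1)%N /\
  lead_coef d = lead_coef ('X * a - b).
Proof.
move=> g_monic g_small d.
set h := 'X * a - b; set e := 'X * (a %% g) - b %% g.
have dgE : d * g = h - e.
  by rewrite /h {1}(divp_eq a g) {1}(divp_eq b g) /d /e; ring.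
have size_mulX_mod c : (size ('X * (c %% g))%R <= size g)%N.
  by rewrite (leq_trans (size_mul_leq _ _)) // size_polyX ltn_modp monic_neq0.
have e_small : (size e < size h)%N.
  rewrite (leq_ltn_trans _ g_small) // (leq_trans (size_add _ _)) //.
  by rewrite size_opp geq_max size_mulX_mod ltnW // ltn_modp monic_neq0.
have [size_dg lead_dg] :
    size (d * g) = size h /\ lead_coef (d * g) = lead_coef h.
  by rewrite dgE; split; [apply: size_addl | apply: lead_coefDl];
    rewrite size_opp.
have d0 : d != 0.
  by apply: contraTneq g_small => d0; rewrite -size_dg d0 mul0r size_poly0.
split; last by rewrite -lead_dg lead_coef_Mmonic.
rewrite -size_dg size_Mmonic //.
move: (monic_neq0 g_monic); rewrite -size_poly_gt0.
by case: (size g) => // k _; rewrite addnS addnK.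
Qed.

Lemma monic_divp {F : fieldType} {g a : {poly F}} :
  g \is monic -> g %| a -> a \is monic -> a %/ g \is monic.
Proof.
move=> g_monic g_dvd /monicP a_lead.
by rewrite monicE -(lead_coef_Mmonic _ g_monic) divpK ?a_lead.
Qed.

Lemma size_toQ (p : {poly int}) : size (toQ p) = size p.
Proof. by rewrite size_map_inj_poly //; apply: intr_inj. Qed.

Lemma lead_coef_toQ (p : {poly int}) : lead_coef (toQ p) = (lead_coef p)%:~R.
Proof. by rewrite lead_coef_map_inj //; apply: intr_inj. Qed.

Lemma toQ_eq0 (p : {poly int}) : (toQ p == 0) = (p == 0).
Proof. by rewrite -size_poly_eq0 size_toQ size_poly_eq0. Qed.

Lemma toQ_monic {p : {poly int}} : p \is monic -> toQ p \is monic.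
Proof. exact: monic_map. Qed.

Lemma toQ_mulX_sub (p q : {poly int}) : toQ ('X * q - p) = 'X * toQ q - toQ p.
Proof. by rewrite /toQ rmorphB rmorphM /= map_polyX. Qed.

Lemma gcd_pp'_monic {p : {poly int}} : p != 0 -> gcd_pp' p \is monic.
Proof.
move=> p0; rewrite monicE /gcd_pp' lead_coefZ mulVf //.
by rewrite lead_coef_eq0 gcdp_eq0 negb_and toQ_eq0 p0.
Qed.

Lemma gcd_pp'_dvdp {p : {poly int}} : p != 0 -> gcd_pp' p %| toQ p.
Proof.
move=> p0; rewrite /gcd_pp' dvdpZl ?dvdp_gcdl //.
by rewrite invr_eq0 lead_coef_eq0 gcdp_eq0 negb_and toQ_eq0 p0.
Qed.

Lemma MinP_monic {p : {poly int}} : p \is monic -> MinP p \is monic.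
Proof.
move=> p_monic; have p0 := monic_neq0 p_monic.
exact: monic_divp (gcd_pp'_monic p0) (gcd_pp'_dvdp p0) (toQ_monic p_monic).
Qed.

Lemma seidel_trace_monic {n : nat} {p : {poly int}} :
  seidel_trace n p -> p \is monic.
Proof.
by case=> _ [_ [size_p [p_lead _]]]; rewrite monicE lead_coefE size_p p_lead.
Qed.

Lemma size_lead_coef_seidel_mulX_sub {n : nat} {p q : {poly int}} :
  seidel_trace n.+3 p -> seidel_trace n.+2 q ->
  size ('X * q - p) = n.+2 /\ lead_coef ('X * q - p) = n.+2%:R.
Proof.
case=> _ [_ [size_p [p_lead [p_sub1 p_sub2]]]].
case=> _ [_ [size_q [q_lead [q_sub1 q_sub2]]]].
have coef_sub2 : ('X * q - p)`_n.+1 = n.+2%:R.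
  move: (p_sub2 isT) (q_sub2 isT); rewrite !subSS !subn0 => p_sub2' q_sub2'.
  rewrite coef_mulX_sub_succ p_sub2' q_sub2'.
  by rewrite opprK addrC (binS n.+2) bin1 PoszD addrAC subrr add0r natz.
have coef_top j : (n.+1 < j)%N -> ('X * q - p)`_j = 0.
  case: j => // j; rewrite ltnS leq_eqVlt => /predU1P[<- | ].
    by rewrite coef_mulX_sub_succ q_sub1 p_sub1 subrr.
  rewrite leq_eqVlt => /predU1P[<- | lt_j].
    by rewrite coef_mulX_sub_succ q_lead p_lead subrr.
  by rewrite coef_mulX_sub_succ !nth_default ?subrr ?size_q ?size_p.
have size_Xq_p : size ('X * q - p) = n.+2.
  by apply: size_poly_eq_last coef_top; rewrite coef_sub2 natz.
by rewrite lead_coefE size_Xq_p.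
Qed.

Theorem lemma4p3 (n : nat) (p q : {poly int}) :
  (3 <= n)%N -> seidel_trace n p ->
  (3 <= (size (MinP p)).-1)%N -> ((size (MinP p)).-1 <= n)%N ->
  J_set n p q ->
  let r := (size (MinP p)).-1 in
  let f := toQ q %/ gcd_pp' p in
  let b := fun i => (MinP p)`_(r - i) in
  let c := fun i => f`_(r.-1 - i) in
  size f = r /\
  c 0%N = 1 /\ b 0%N = 1 /\ c 1%N = b 1%N /\ c 2%N = b 2%N + (n.-1)%:R.
Proof.
move=> n3 p_tr r3 _ [_ [q_tr _]].
case: n n3 p_tr q_tr => [|[|[|n]]] // _ p_tr q_tr r f b c.
have p_monic := seidel_trace_monic p_tr.
have M_monic := MinP_monic p_monic.
have g_monic := gcd_pp'_monic (monic_neq0 p_monic).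
have [[_ [_ [size_p _]]] [_ [_ [size_q _]]]] := (p_tr, q_tr).
have [k size_g] : exists k, size (gcd_pp' p) = k.+1.
  by exists (size (gcd_pp' p)).-1; rewrite prednK // size_poly_gt0 monic_neq0.
have size_M : size (MinP p) = (n.+4 - k)%N.
  by rewrite size_divp ?monic_neq0 // size_toQ size_p size_g.
have size_f : size f = (n.+3 - k)%N.
  by rewrite size_divp ?monic_neq0 // size_toQ size_q size_g.
have [s n_eq] : exists s, n = (s + k)%N.
  by exists (n - k)%N; move: r3; rewrite size_M; lia.
have [size_h lead_h] := size_lead_coef_seidel_mulX_sub p_tr q_tr.
have g_small : (size (gcd_pp' p) < size ('X * toQ q - toQ p)%R)%N.
  by rewrite -toQ_mulX_sub size_toQ size_h size_g n_eq; lia.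
have [size_d lead_d] := size_lead_coef_mulX_divp_sub g_monic g_small.
rewrite -toQ_mulX_sub size_toQ size_h size_g n_eq -!addSn addnK in size_d.
rewrite -toQ_mulX_sub lead_coef_toQ lead_h rmorph_nat in lead_d.
have [top0 top1 top2] := top_coefs_mulX_sub size_d lead_d.
rewrite n_eq -!addSn !addnK in size_M size_f.
have M_lead : (MinP p)`_s.+3 = 1.
  by rewrite -(monicP M_monic) lead_coefE size_M.
split; first by rewrite size_f /r size_M.
by rewrite /c /b /r size_M /= !subSS !subn0 top0 top1 top2 M_lead.
Qed.
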